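(* Let $T=(t_{ij})$ be an $\mathbb{N}$-tableau of shape $\lambda$ and let $\widehat{T}$ be its image under the toggle map defined in the context. Then \[|\widehat{T}|=\sum_{(i,j)\in\lambda}t_{ij}\,h_{\lambda}(i,j).\]
   Context: Partitions are drawn in English notation with matrix coordinates: the box in row $i$ and column $j$ is $(i,j)$. An $\mathbb{N}$-tableau of shape $\lambda$ is an assignment of a nonnegative integer to each box of $\lambda$; its weight $|T|$ is the sum of its entries. The hook $H_\lambda(i,j)$ is the set of boxes $(i,j')\in\lambda$ with $j'\ge j$ together with the boxes $(i',j)\in\lambda$ with $i'\ge i$, and $h_\lambda(i,j)=|H_\lambda(i,j)|$. A corner box is a box $(i,j)$ such that neither $(i+1,j)$ nor $(i,j+1)$ is a box. The toggle map $T\mapsto\widehat{T}$ is defined recursively: $\widehat{\emptyset}=\emptyset$; if $T'$ is obtained from $T$ by adding a corner box $(i,j)$ (of $\mathrm{sh}(T')$) with entry $x$, then $\widehat{T'}$ is obtained from $\widehat{T}$ as follows. For $k\ge1$ let $\beta_k,\gamma_k,\alpha_k$ be the entries of $\widehat{T}$ at $(i-k,j-k)$, $(i-k+1,j-k)$, $(i-k,j-k+1)$ respectively (taken to be $0$ if the box is not in $\mathrm{sh}(T)$). Then $\widehat{T'}$ agrees with $\widehat{T}$ except that for $1\le k<\min(i,j)$ the entry at $(i-k,j-k)$ becomes $\max(\alpha_{k+1},\gamma_{k+1})+\min(\alpha_k,\gamma_k)-\beta_k$, and the entry at $(i,j)$ is $\max(\alpha_1,\gamma_1)+x$. This is independent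 of the order in which boxes are added. *)

From mathcomp Require Import all_boot all_order all_algebra.
Set Implicit Arguments. Unset Strict Implicit. Unset Printing Implicit Defensive.
Import Order.TTheory GRing.Theory Num.Theory.

(* Partitions: weakly decreasing lists of positive parts (row lengths).
   Boxes use 1-based matrix coordinates (i, j). *)
Definition is_partition (la : seq nat) : bool :=
  sorted geq la && all (fun x => 0 < x) la.

Definition boxes (la : seq nat) : seq (nat * nat) :=
  flatten [seq [seq (i.+1, j.+1) | j <- iota 0 (nth 0 la i)] | i <- iota 0 (size la)].

Definition hook (la : seq nat) (i j : nat) : nat :=
  count (fun b : nat * nat => ((b.1 == i) && (j <= b.2)) || ((b.2 == j) && (i <= b.1)))
        (boxes la).

(* N-tableaux are functions nat -> nat -> nat (only values on boxes matter);
   toggled tableaux are int-valued (the toggle formula involves a subtraction). *)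

Local Open Scope ring_scope.

(* One step: S = boxes of sh(T) (the old shape), F = \hat T, adding corner (i,j)
   with entry x. Entries outside S are read as 0. *)
Definition toggle_step (S : seq (nat * nat)) (F : nat -> nat -> int)
    (i j : nat) (x : nat) : nat -> nat -> int :=
  let G a b := if (a, b) \in S then F a b else 0 in
  fun a b =>
    if (a == i) && (b == j) then Num.max (G i.-1 j) (G i j.-1) + x%:Z
    else if [&& (1 <= a)%N, (a < i)%N, (1 <= b)%N & (b + (i - a))%N == j] then
      (* a = i-k, b = j-k with 1 <= k < min(i,j) *)
      Num.max (G a.-1 b) (G a b.-1) + Num.min (G a b.+1) (G a.+1 b) - G a b
    else F a b.

(* The toggle map, computed by adding the boxes of la row by row, left to right
   (each added box is a corner of the new shape; the result is independent of
   the order by the paper). *)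
Definition toggle (la : seq nat) (T : nat -> nat -> nat) : nat -> nat -> int :=
  (foldl (fun (st : seq (nat * nat) * (nat -> nat -> int)) (b : nat * nat) =>
            (rcons st.1 b, toggle_step st.1 st.2 b.1 b.2 (T b.1 b.2)))
         ([::], fun _ _ => 0) (boxes la)).2.

Definition weightZ (la : seq nat) (F : nat -> nat -> int) : int :=
  \sum_(b <- boxes la) F b.1 b.2.

(* Add the boxes of la one at a time. Along the way, \hat T stays nonnegative,
   supported on the current shape S and weakly increasing along rows and
   columns, and for every box (p, q) ending a diagonal of S the sum of \hat T
   along that diagonal equals the sum of T over the rectangle [1..p] x [1..q].
   Adding a corner (i, j) changes only the diagonal through (i, j). The max/min
   toggle rule telescopes along it, so its sum becomes t_ij plus the diagonal
   sums at (i-1, j) and (i, j-1) minus the one at (i-1, j-1), which by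
   inclusion-exclusion is again the rectangle sum. The weight therefore grows by
   rect(i, j) - rect(i-1, j-1) = t_ij + (column above (i, j)) + (row left of
   (i, j)); the new box enters exactly the hooks of the boxes in that row and
   column, so sum t_xy h(x, y) grows by the same amount. *)

From mathcomp Require Import all_boot all_order all_algebra zify ring.
Import GRing.Theory Num.Theory.
Set Implicit Arguments. Unset Strict Implicit. Unset Printing Implicit Defensive.

Definition lexlt (x y : nat * nat) : bool :=
  (x.1 < y.1) || (x.1 == y.1) && (x.2 < y.2).

Lemma lexlt_irr : irreflexive lexlt.
Proof. by move=> [a b]; rewrite /lexlt /= !ltnn andbF. Qed.

Definition rows (la : seq nat) (k n : nat) : seq (nat * nat) :=
  flatten [seq [seq (i.+1, j.+1) | j <- iota 0 (nth 0 la i)] | i <- iota k n].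

Lemma mem_rows la k n a b :
  ((a, b) \in rows la k n) = [&& k < a, a <= k + n, 0 < b & b <= nth 0 la a.-1].
Proof.
apply/idP/idP.
  by case/flatten_mapP => i + /mapP[j]; rewrite !mem_iota => ? ? [-> ->] /=; lia.
case/and4P => ka an b0 bla; apply/flatten_mapP; exists a.-1.
  by rewrite mem_iota; lia.
by apply/mapP; exists b.-1; [rewrite mem_iota|congr pair]; lia.
Qed.

Lemma mem_boxes la a b :
  ((a, b) \in boxes la) = [&& 0 < a, a <= size la, 0 < b & b <= nth 0 la a.-1].
Proof. exact: mem_rows. Qed.

Lemma rows_lex_pairwise la k n : pairwise lexlt (rows la k n).
Proof.
elim: n k => [|n IHn] k //=.
rewrite /rows /= pairwise_cat -/(rows la k.+1 n) IHn andbT; apply/andP; split.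
  apply/allrelP => x [a b] /mapP[j _ ->]; rewrite mem_rows /lexlt /=; lia.
rewrite pairwise_map; apply: (@sub_pairwise _ ltn).
  by move=> u v /= uv; rewrite /lexlt /= eqxx ltnn.
by rewrite -sorted_pairwise ?iota_ltn_sorted //; apply: ltn_trans.
Qed.

Lemma boxes_lex_pairwise la : pairwise lexlt (boxes la).
Proof. exact: rows_lex_pairwise. Qed.

Record addable_corner (S : seq (nat * nat)) (i j : nat) : Prop := AddableCorner {
  corner_uniq : uniq S;
  corner_notin : (i, j) \notin S;
  corner_pos : forall a b, (a, b) \in S -> 0 < a /\ 0 < b;
  corner_down : forall a b a' b', (a, b) \in S ->
    0 < a' <= a -> 0 < b' <= b -> (a', b') \in S;
  corner_up : 1 < i -> (i.-1, j) \in S;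
  corner_left : 1 < j -> (i, j.-1) \in S }.

Lemma partition_nonincr la p p' : is_partition la -> p' <= p ->
  nth 0 la p <= nth 0 la p'.
Proof.
case/andP=> sorted_la _ le_pp'; have [lt_p|] := ltnP p (size la); last first.
  by move=> ge_p; rewrite nth_default.
apply: (sorted_leq_nth (fun _ _ _ h1 h2 => leq_trans h2 h1) leqnn 0 sorted_la);
  rewrite ?inE //; lia.
Qed.

Lemma boxes_prefix_corner la s1 a b s2 : is_partition la ->
  s1 ++ (a, b) :: s2 = boxes la -> [/\ 0 < a, 0 < b & addable_corner s1 a b].
Proof.
move=> la_part boxes_eq.
have lex := boxes_lex_pairwise la.
have uniq_boxes := pairwise_uniq lexlt_irr lex.
rewrite -boxes_eq pairwise_cat /= in lex; case/and3P: lex => /allrelP lt_s1 _ /andP[/allP lt_s2 _].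
have mem_s1 c d : ((c, d) \in s1) = ((c, d) \in boxes la) && lexlt (c, d) (a, b).
  apply/idP/andP => [cd_s1|[]]; first by rewrite -boxes_eq mem_cat cd_s1 lt_s1 ?mem_head.
  rewrite -boxes_eq mem_cat in_cons => /or3P[// | /eqP -> | /lt_s2]; first by rewrite lexlt_irr.
  by rewrite /lexlt /=; lia.
have : (a, b) \in boxes la by rewrite -boxes_eq mem_cat mem_head orbT.
rewrite mem_boxes => /and4P[a0 a_la b0 b_la].
split=> //; split.
- by move: uniq_boxes; rewrite -boxes_eq cat_uniq => /andP[].
- by rewrite mem_s1 lexlt_irr andbF.
- by move=> c d; rewrite mem_s1 mem_boxes => /andP[/and4P[]]; lia.
- move=> c d c' d'; rewrite !mem_s1 !mem_boxes /lexlt /=.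
  move=> /andP[/and4P[c0 c_la d0 d_la] lt_ab] c'_le d'_le.
  have := partition_nonincr la_part (_ : c'.-1 <= c.-1); lia.
- move=> a1; rewrite mem_s1 mem_boxes /lexlt /=.
  have := partition_nonincr la_part (_ : a.-2 <= a.-1); lia.
- by move=> b1; rewrite mem_s1 mem_boxes /lexlt /=; lia.
Qed.

Lemma big_uniq_supp (R : eqType) (idx : R) (op : Monoid.com_law idx) (I : eqType)
    (r s : seq I) (F : I -> R) :
  uniq r -> uniq s -> (forall x, F x != idx -> (x \in r) = (x \in s)) ->
  \big[op/idx]_(x <- r) F x = \big[op/idx]_(x <- s) F x.
Proof.
move=> uniq_r uniq_s rs; apply: perm_big_supp.
apply: uniq_perm; rewrite ?filter_uniq // => x; rewrite !mem_filter.
by case: eqVneq => //= /rs.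
Qed.

Local Open Scope ring_scope.

Lemma telescope_max_min (R : realDomainType) (P Q B : nat -> R) n :
  \sum_(0 <= k < n) (Num.max (P k.+1) (Q k.+1) + Num.min (P k) (Q k) - B k) =
  \sum_(0 <= k < n) (P k + Q k - B k) + Num.max (P n) (Q n) - Num.max (P 0%N) (Q 0%N).
Proof.
rewrite -addrA -(telescope_sumr (fun k => Num.max (P k) (Q k)) (leq0n n)) -big_split /=.
by apply: eq_bigr => k _; rewrite minr_to_max; ring.
Qed.

Definition diag_sum (F : nat -> nat -> int) (p q : nat) : int :=
  \sum_(0 <= k < minn p q) F (p - k)%N (q - k)%N.

Definition rect_sum (T : nat -> nat -> nat) (p q : nat) : int :=
  \sum_(0 <= a < p) \sum_(0 <= b < q) (T a.+1 b.+1)%:Z.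

Lemma diag_sum_axis F p q : (p == 0)%N || (q == 0)%N -> diag_sum F p q = 0.
Proof. by case/orP=> /eqP->; rewrite /diag_sum ?min0n ?minn0 big_geq. Qed.

Lemma rect_sum_axis T p q : (p == 0)%N || (q == 0)%N -> rect_sum T p q = 0.
Proof.
case/orP=> /eqP->; rewrite /rect_sum; first by rewrite big_geq.
by rewrite big1 // => a _; rewrite big_geq.
Qed.

Lemma diag_sum_widen F p q n : (forall b, F 0%N b = 0) -> (forall a, F a 0%N = 0) ->
  (minn p q <= n)%N -> diag_sum F p q = \sum_(0 <= k < n) F (p - k)%N (q - k)%N.
Proof.
move=> F0b Fa0 le_n; rewrite /diag_sum (big_cat_nat (leq0n _) le_n) /=.
rewrite [X in _ = _ + X]big1_seq ?addr0 // => k /andP[_].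
rewrite mem_index_iota => /andP[le_k _].
by case: (leqP p q) => ?; [rewrite (_ : p - k = 0)%N ?F0b | rewrite (_ : q - k = 0)%N ?Fa0]; lia.
Qed.

Lemma rect_sumSl T p q : rect_sum T p.+1 q = rect_sum T p q + \sum_(0 <= b < q) (T p.+1 b.+1)%:Z.
Proof. by rewrite /rect_sum big_nat_recr. Qed.

Lemma rect_sumSr T p q : rect_sum T p q.+1 = rect_sum T p q + \sum_(0 <= a < p) (T a.+1 q.+1)%:Z.
Proof. by rewrite /rect_sum -big_split; apply: eq_bigr => a _; rewrite big_nat_recr. Qed.

(* [(a, b) = (i - k, j - k)] with [1 <= k < min(i, j)], as in the toggle rule. *)
Definition diagNW (i j a b : nat) : bool :=
  [&& 0 < a, a < i, 0 < b & b + (i - a) == j]%N.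

Definition toggle_val (F : nat -> nat -> int) (a b : nat) : int :=
  Num.max (F a.-1 b) (F a b.-1) + Num.min (F a b.+1) (F a.+1 b) - F a b.

Definition toggle_at (F : nat -> nat -> int) (i j x a b : nat) : int :=
  if (a == i) && (b == j) then Num.max (F i.-1 j) (F i j.-1) + x%:Z
  else if diagNW i j a b then toggle_val F a b else F a b.

Lemma toggle_stepE S F i j x a b : (forall a b, (a, b) \notin S -> F a b = 0) ->
  toggle_step S F i j x a b = toggle_at F i j x a b.
Proof.
move=> F_supp; have F_ifS c d : (if (c, d) \in S then F c d else 0) = F c d.
  by case: ifP => // /negbT /F_supp.
by rewrite /toggle_step /toggle_at /toggle_val /diagNW !F_ifS.
Qed.

Lemma toggle_at_corner F i j x : toggle_at F i j x i j = Num.max (F i.-1 j) (F i j.-1) + x%:Z.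
Proof. by rewrite /toggle_at !eqxx. Qed.

Lemma toggle_at_diag F i j x a b : diagNW i j a b -> toggle_at F i j x a b = toggle_val F a b.
Proof.
move=> diag_ab; rewrite /toggle_at diag_ab; case: ifP => // /andP[/eqP a_i _].
by move: diag_ab; rewrite /diagNW a_i ltnn andbF.
Qed.

Lemma toggle_at_id F i j x a b : (a, b) != (i, j) -> ~~ diagNW i j a b ->
  toggle_at F i j x a b = F a b.
Proof. by rewrite /toggle_at xpair_eqE => /negbTE-> /negbTE->. Qed.

Lemma toggle_val_between F a b :
  F a.-1 b <= F a b -> F a b.-1 <= F a b -> F a b <= F a b.+1 -> F a b <= F a.+1 b ->
  Num.max (F a.-1 b) (F a b.-1) <= toggle_val F a b <= Num.min (F a b.+1) (F a.+1 b).
Proof. rewrite /toggle_val; lia. Qed.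

Lemma diag_sum_toggle F i j x :
    (forall b, F 0%N b = 0) -> (forall a, F a 0%N = 0) -> (forall a b, 0 <= F a b) ->
  diag_sum (toggle_at F i.+1 j.+1 x) i.+1 j.+1 =
  x%:Z + diag_sum F i j.+1 + diag_sum F i.+1 j - diag_sum F i j.
Proof.
move=> F0b Fa0 F_ge0; set m := minn i j.
pose P k := F (i - k)%N (j.+1 - k)%N; pose Q k := F (i.+1 - k)%N (j - k)%N.
have diag_P : diag_sum F i j.+1 = \sum_(0 <= k < m) P k + P m.
  by rewrite (diag_sum_widen F0b Fa0 (_ : _ <= m.+1)%N) ?big_nat_recr //; lia.
have diag_Q : diag_sum F i.+1 j = \sum_(0 <= k < m) Q k + Q m.
  by rewrite (diag_sum_widen F0b Fa0 (_ : _ <= m.+1)%N) ?big_nat_recr //; lia.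
have max_PQm : Num.max (P m) (Q m) = P m + Q m.
  (* one of the two entries lies on an axis, hence vanishes *)
  have := F_ge0 (i - m)%N (j.+1 - m)%N; have := F_ge0 (i.+1 - m)%N (j - m)%N.
  rewrite /P /Q; case: (leqP i j) => ?.
    by rewrite (_ : i - m = 0)%N ?F0b; lia.
  by rewrite (_ : j - m = 0)%N ?Fa0; lia.
have toggled_k k : (0 <= k < m)%N ->
    toggle_at F i.+1 j.+1 x (i.+1 - k.+1) (j.+1 - k.+1) =
    Num.max (P k.+1) (Q k.+1) + Num.min (P k) (Q k) - F (i - k)%N (j - k)%N.
  move=> lt_km; rewrite !subSS toggle_at_diag /toggle_val; last by rewrite /diagNW; lia.
  rewrite /P /Q !subSS.
  have -> : (i - k).-1 = (i - k.+1)%N by lia.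
  have -> : (j - k).-1 = (j - k.+1)%N by lia.
  have -> : (i - k).+1 = (i.+1 - k)%N by lia.
  by have -> : (j - k).+1 = (j.+1 - k)%N by lia.
rewrite diag_P diag_Q {1}/diag_sum (_ : minn i.+1 j.+1 = m.+1) ?minnSS //.
rewrite big_nat_recl // !subn0 toggle_at_corner /=.
rewrite (eq_big_nat _ _ toggled_k) telescope_max_min sumrB big_split /= max_PQm.
by rewrite /P /Q !subn0 /diag_sum -/m; ring.
Qed.

Definition in_hook (z x : nat * nat) : bool :=
  ((z.1 == x.1) && (x.2 <= z.2)%N) || ((z.2 == x.2) && (x.1 <= z.1)%N).

Definition hook_in (S : seq (nat * nat)) (a b : nat) : nat := count (in_hook^~ (a, b)) S.

Lemma hook_in_rcons S z a b : hook_in (rcons S z) a b = (hook_in S a b + in_hook z (a, b))%N.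
Proof. by rewrite /hook_in -cats1 count_cat /= addn0. Qed.

(* [(p, q)] ends a maximal diagonal of [S], or lies on an axis. *)
Definition diag_end (S : seq (nat * nat)) (p q : nat) : bool :=
  ((p.+1, q.+1) \notin S) && [|| p == 0, q == 0 | (p, q) \in S]%N.

Record toggle_inv (T : nat -> nat -> nat) (S : seq (nat * nat)) (F : nat -> nat -> int) :
    Prop := ToggleInv {
  inv_supp : forall a b, (a, b) \notin S -> F a b = 0;
  inv_ge0 : forall a b, 0 <= F a b;
  inv_mono : forall a b, (a, b) \in S -> F a.-1 b <= F a b /\ F a b.-1 <= F a b;
  inv_diag : forall p q, diag_end S p q -> diag_sum F p q = rect_sum T p q;
  inv_weight : \sum_(x <- S) F x.1 x.2 = \sum_(x <- S) (T x.1 x.2 * hook_in S x.1 x.2)%N%:Z }.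

Lemma toggle_inv_nil T : toggle_inv T [::] (fun _ _ => 0).
Proof.
split=> // [p q|]; last by rewrite !big_nil.
by rewrite /diag_end in_nil orbF => axis; rewrite diag_sum_axis ?rect_sum_axis.
Qed.

Lemma eq_toggle_inv T S F G : F =2 G -> toggle_inv T S F -> toggle_inv T S G.
Proof.
move=> FG [F_supp F_ge0 F_mono F_diag F_weight]; split=> [a b|a b|a b|p q|].
- by rewrite -FG; apply: F_supp.
- by rewrite -FG.
- by rewrite -!FG; apply: F_mono.
- by move=> end_pq; rewrite -F_diag //; apply: eq_bigr => k _; rewrite FG.
- by rewrite -F_weight; apply: eq_bigr => x _; rewrite FG.
Qed.

Lemma rect_sum_corner T p q :
  rect_sum T p.+1 q.+1 = (T p.+1 q.+1)%:Z + rect_sum T p q.+1 + rect_sum T p.+1 q - rect_sum T p q.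
Proof. by rewrite rect_sumSl rect_sumSl big_nat_recr //=; ring. Qed.

Section ToggleStep.

Variables (T : nat -> nat -> nat) (S : seq (nat * nat)) (F : nat -> nat -> int) (i j : nat).
Hypothesis corner : addable_corner S i.+1 j.+1.
Hypothesis inv : toggle_inv T S F.

Local Notation y := (i.+1, j.+1).
Local Notation G := (toggle_at F i.+1 j.+1 (T i.+1 j.+1)).

Lemma corner_rect a b : (0 < a <= i)%N -> (0 < b <= j.+1)%N -> (a, b) \in S.
Proof.
move=> a_le b_le; apply: (corner_down corner (corner_up corner _)) => //; lia.
Qed.

Lemma corner_row b : (0 < b <= j)%N -> (i.+1, b) \in S.
Proof.
move=> b_le; apply: (corner_down corner (corner_left corner _)) => //; lia.
Qed.

Lemma corner_beyond a b : (i.+1 <= a)%N -> (j.+1 <= b)%N -> (a, b) \notin S.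
Proof.
move=> a_ge b_ge; apply: contra (corner_notin corner) => ab_S.
apply: (corner_down corner ab_S); lia.
Qed.

Lemma corner_diag_in c d : (c + j = d + i)%N -> (0 < c <= i.+1)%N -> (0 < d)%N ->
  (c, d) \in rcons S y.
Proof.
move=> cd c_le d_gt0; rewrite mem_rcons in_cons.
have [c_i|c_lt] := eqVneq c i.+1; first by rewrite c_i (_ : d = j.+1) ?eqxx //; lia.
by rewrite corner_rect ?orbT //; lia.
Qed.

Lemma diagNW_in a b : diagNW i.+1 j.+1 a b ->
  [/\ (a, b) \in S, (a, b.+1) \in S & (a.+1, b) \in S].
Proof.
rewrite /diagNW => diag_ab; split; try (apply: corner_rect; lia).
have [->|a_lt] := eqVneq a i; first by apply: corner_row; lia.
by apply: corner_rect; lia.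
Qed.

Lemma inv_row0 b : F 0%N b = 0.
Proof. by apply: (inv_supp inv); apply/negP => /(corner_pos corner) []. Qed.

Lemma inv_col0 a : F a 0%N = 0.
Proof. by apply: (inv_supp inv); apply/negP => /(corner_pos corner) []. Qed.

Lemma toggle_off_diag a b : (a + j != b + i)%N -> G a b = F a b.
Proof.
move=> off; apply: toggle_at_id; apply: contra off; rewrite ?xpair_eqE /diagNW; lia.
Qed.

Lemma toggle_diag_between a b : diagNW i.+1 j.+1 a b ->
  Num.max (F a.-1 b) (F a b.-1) <= G a b <= Num.min (F a b.+1) (F a.+1 b).
Proof.
move=> diag_ab; have [ab_S ab1_S a1b_S] := diagNW_in diag_ab.
have [? ?] := inv_mono inv ab_S; have [_ ?] := inv_mono inv ab1_S.
have [? _] := inv_mono inv a1b_S.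
by rewrite toggle_at_diag //; apply: toggle_val_between.
Qed.

Lemma toggle_supp a b : (a, b) \notin rcons S y -> G a b = 0.
Proof.
rewrite mem_rcons in_cons negb_or => /andP[ab_y ab_S].
have [/diagNW_in[ab_S' _ _]|off] := boolP (diagNW i.+1 j.+1 a b); first by rewrite ab_S' in ab_S.
by rewrite toggle_at_id // (inv_supp inv).
Qed.

Lemma toggle_ge0 a b : 0 <= G a b.
Proof.
have F_ge0 := inv_ge0 inv.
have [[-> ->]|ab_y] := eqVneq (a, b) y.
  by rewrite toggle_at_corner /=; have := F_ge0 i j.+1; lia.
have [diag_ab|off] := boolP (diagNW i.+1 j.+1 a b); last by rewrite toggle_at_id.
by have := toggle_diag_between diag_ab; have := F_ge0 a.-1 b; lia.
Qed.

Lemma toggle_le_at a b c d : (a, b) \in S -> (c, d) \in [:: (a.-1, b); (a, b.-1)] ->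
  G c d <= F a b.
Proof.
move=> ab_S cd_nbr; have [a_gt0 b_gt0] := corner_pos corner ab_S.
have le_F : F c d <= F a b.
  by have := inv_mono inv ab_S; move: cd_nbr; rewrite !inE => /orP[] /eqP[-> ->] [].
have [[c_y d_y]|cd_y] := eqVneq (c, d) y.
  suff : (a, b) \notin S by rewrite ab_S.
  by apply: corner_beyond; move: cd_nbr; rewrite !inE c_y d_y => /orP[] /eqP[? ?]; lia.
have [diag_cd|off] := boolP (diagNW i.+1 j.+1 c d); last by rewrite toggle_at_id.
have := toggle_diag_between diag_cd.
by move: cd_nbr; rewrite !inE => /orP[] /eqP[-> ->]; rewrite ?prednK //; lia.
Qed.

Lemma toggle_mono a b : (a, b) \in rcons S y -> G a.-1 b <= G a b /\ G a b.-1 <= G a b.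
Proof.
rewrite mem_rcons in_cons => /orP[/eqP[-> ->] | ab_S].
  by rewrite toggle_at_corner /= !toggle_off_diag; lia.
have [diag_ab|off] := boolP (diagNW i.+1 j.+1 a b).
  have := toggle_diag_between diag_ab.
  by rewrite [G a.-1 b]toggle_off_diag ?[G a b.-1]toggle_off_diag; move: diag_ab;
    rewrite /diagNW; lia.
have ab_y : (a, b) != y by apply: contraNneq (corner_notin corner) => <-.
by rewrite [G a b]toggle_at_id //; split; apply: toggle_le_at; rewrite ?inE ?eqxx ?orbT.
Qed.

Lemma toggle_diag_id p q : diag_end (rcons S y) p q -> (p, q) != y ->
  diag_sum G p q = diag_sum F p q.
Proof.
move=> /andP[pq1_S pq_axis] pq_y; apply: eq_big_nat => k /andP[_ lt_k].
have [on_diag|] := eqVneq (p - k + j)%N (q - k + i)%N; last exact: toggle_off_diag.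
have [p_le|p_gt] := leqP p i.
  by move: pq1_S; rewrite corner_diag_in //; lia.
have pq_S : (p, q) \notin S by apply: corner_beyond; lia.
by move: pq_axis; rewrite mem_rcons in_cons (negbTE pq_y) (negbTE pq_S) orbF; lia.
Qed.

Lemma diag_end_corner : diag_end S i j.
Proof.
rewrite /diag_end corner_notin //=; case: (posnP i) => //= i_gt0.
by case: (posnP j) => //= j_gt0; apply: corner_rect; lia.
Qed.

Lemma toggle_diag p q : diag_end (rcons S y) p q -> diag_sum G p q = rect_sum T p q.
Proof.
move=> end_pq; have [[-> ->]|pq_y] := eqVneq (p, q) y; last first.
  rewrite toggle_diag_id // (inv_diag inv) //.
  move: end_pq; rewrite /diag_end !mem_rcons !in_cons negb_or (negbTE pq_y) /=.
  by case/andP=> /andP[_ ->].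
rewrite diag_sum_toggle; [|exact: inv_row0|exact: inv_col0|exact: inv_ge0 inv].
rewrite rect_sum_corner !(inv_diag inv) ?diag_end_corner // /diag_end.
- by rewrite corner_beyond //=; case: (posnP j) => //= j_gt0; apply: corner_row; lia.
- by rewrite corner_beyond //=; case: (posnP i) => //= i_gt0; apply: corner_rect; lia.
Qed.

Lemma toggle_weight_diff :
  \sum_(x <- rcons S y) G x.1 x.2 =
  \sum_(x <- S) F x.1 x.2 + diag_sum G i.+1 j.+1 - diag_sum F i j.
Proof.
set m := minn i j.
have diag_G : diag_sum G i.+1 j.+1 = G i.+1 j.+1 + \sum_(0 <= k < m) G (i - k)%N (j - k)%N.
  by rewrite /diag_sum minnSS big_nat_recl // !subn0.
have sum_S : \sum_(x <- S) (G x.1 x.2 - F x.1 x.2) =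
    \sum_(x <- [seq (i - k, j - k)%N | k <- index_iota 0 m]) (G x.1 x.2 - F x.1 x.2).
  apply: big_uniq_supp (corner_uniq corner) _ _.
    rewrite map_inj_in_uniq ?iota_uniq // => k1 k2; rewrite !mem_index_iota => ? ? [? ?]; lia.
  move=> [a b] /=; rewrite subr_eq0.
  have [diag_ab _|off] := boolP (diagNW i.+1 j.+1 a b).
    have [-> _ _] := diagNW_in diag_ab; apply/esym/mapP; exists (i - a)%N.
      by rewrite mem_index_iota; move: diag_ab; rewrite /diagNW; lia.
    by congr pair; move: diag_ab; rewrite /diagNW; lia.
  have [[-> ->] _|ab_y] := eqVneq (a, b) y; last by rewrite toggle_at_id ?eqxx.
  rewrite (negbTE (corner_notin corner)); apply/esym/negbTE/mapP => -[k].
  by rewrite mem_index_iota => ? [? ?]; lia.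
rewrite big_rcons /= (_ : \sum_(x <- S) G x.1 x.2 =
  \sum_(x <- S) F x.1 x.2 + \sum_(x <- S) (G x.1 x.2 - F x.1 x.2)); last first.
  by rewrite sumrB addrC subrK.
by rewrite sum_S big_map sumrB diag_G /diag_sum -/m /=; ring.
Qed.

Lemma hook_in_corner : hook_in S i.+1 j.+1 = 0%N.
Proof.
rewrite /hook_in -(count_pred0 S); apply: eq_in_count => -[a b] ab_S; rewrite /in_hook /=.
by apply/negbTE; apply: contraTN ab_S => ?; apply: corner_beyond; lia.
Qed.

Lemma arm_leg_weight :
  \sum_(x <- S) (T x.1 x.2 * in_hook y x)%N%:Z =
  \sum_(0 <= a < i) (T a.+1 j.+1)%:Z + \sum_(0 <= b < j) (T i.+1 b.+1)%:Z.
Proof.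
have mem_arm a b : ((a, b) \in [seq (c.+1, j.+1) | c <- index_iota 0 i]) =
    (b == j.+1) && (0 < a <= i)%N.
  apply/mapP/idP => [[c] | ?]; first by rewrite mem_index_iota => ? [-> ->]; lia.
  by exists a.-1; [rewrite mem_index_iota | congr pair]; lia.
have mem_leg a b : ((a, b) \in [seq (i.+1, d.+1) | d <- index_iota 0 j]) =
    (a == i.+1) && (0 < b <= j)%N.
  apply/mapP/idP => [[d] | ?]; first by rewrite mem_index_iota => ? [-> ->]; lia.
  by exists b.-1; [rewrite mem_index_iota | congr pair]; lia.
rewrite (@big_uniq_supp _ _ _ _ _
  ([seq (c.+1, j.+1) | c <- index_iota 0 i] ++ [seq (i.+1, d.+1) | d <- index_iota 0 j])).
- rewrite big_cat !big_map /=; congr (_ + _); apply: eq_big_nat => c /andP[_ lt_c];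
    by rewrite (_ : in_hook _ _ = true) ?muln1 // /in_hook /=; lia.
- exact: corner_uniq corner.
- rewrite cat_uniq !map_inj_uniq ?iota_uniq // => [|? ? []|? ? []] //=.
  by rewrite andbT; apply/hasPn => -[a b]; rewrite mem_arm mem_leg; lia.
move=> [a b] nz; have hook_ab : in_hook y (a, b).
  by apply: contraNT nz => /negbTE->; rewrite muln0.
rewrite mem_cat mem_arm mem_leg; apply/idP/idP => [ab_S | ].
  have [a_gt0 b_gt0] := corner_pos corner ab_S.
  have : ~~ ((i.+1 <= a) && (j.+1 <= b))%N.
    by apply: contraTN ab_S => /andP[? ?]; apply: corner_beyond.
  by move: hook_ab; rewrite /in_hook /=; lia.
by case/orP=> /andP[/eqP-> ?]; [apply: corner_rect | apply: corner_row]; lia.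
Qed.

Lemma hook_weight_diff :
  \sum_(x <- rcons S y) (T x.1 x.2 * hook_in (rcons S y) x.1 x.2)%N%:Z =
  \sum_(x <- S) (T x.1 x.2 * hook_in S x.1 x.2)%N%:Z + rect_sum T i.+1 j.+1 - rect_sum T i j.
Proof.
rewrite big_rcons /=.
have -> : \sum_(x <- S) (T x.1 x.2 * hook_in (rcons S y) x.1 x.2)%N%:Z =
    \sum_(x <- S) (T x.1 x.2 * hook_in S x.1 x.2)%N%:Z +
    \sum_(x <- S) (T x.1 x.2 * in_hook y x)%N%:Z.
  by rewrite -big_split; apply: eq_bigr => -[a b] _; rewrite hook_in_rcons mulnDr PoszD.
rewrite hook_in_rcons hook_in_corner arm_leg_weight /in_hook /= !eqxx leqnn /=.
by rewrite muln1 rect_sumSl rect_sumSr big_nat_recr //=; ring.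
Qed.

Lemma toggle_inv_rcons : toggle_inv T (rcons S y) G.
Proof.
split; [exact: toggle_supp | exact: toggle_ge0 | exact: toggle_mono | exact: toggle_diag |].
rewrite toggle_weight_diff hook_weight_diff (inv_weight inv) toggle_diag.
  by rewrite (inv_diag inv diag_end_corner).
rewrite /diag_end !mem_rcons !in_cons eqxx orbT andbT negb_or.
by rewrite corner_beyond // andbT; apply/eqP => -[]; lia.
Qed.

End ToggleStep.

Lemma toggle_step_inv T S F i j : addable_corner S i.+1 j.+1 -> toggle_inv T S F ->
  toggle_inv T (rcons S (i.+1, j.+1)) (toggle_step S F i.+1 j.+1 (T i.+1 j.+1)).
Proof.
move=> corner inv; apply: eq_toggle_inv (toggle_inv_rcons corner inv) => a b.
by rewrite toggle_stepE //; exact: inv_supp inv.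
Qed.

Definition toggle_push (T : nat -> nat -> nat)
    (st : seq (nat * nat) * (nat -> nat -> int)) (b : nat * nat) :=
  (rcons st.1 b, toggle_step st.1 st.2 b.1 b.2 (T b.1 b.2)).

Lemma toggle_push_inv la T s1 s2 F : is_partition la -> s1 ++ s2 = boxes la ->
  toggle_inv T s1 F -> toggle_inv T (boxes la) (foldl (toggle_push T) (s1, F) s2).2.
Proof.
move=> la_part; elim: s2 s1 F => [|[a b] s2 IHs2] s1 F; first by rewrite cats0 => ->.
move=> s1_boxes inv_s1; apply: IHs2; first by rewrite cat_rcons.
have [+ + corner] := boxes_prefix_corner la_part s1_boxes.
by case: a b corner {s1_boxes} => [|a] [|b] // corner _ _; apply: toggle_step_inv.
Qed.

Lemma toggle_invariant la T : is_partition la -> toggle_inv T (boxes la) (toggle la T).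
Proof. by move=> la_part; apply: toggle_push_inv (toggle_inv_nil T). Qed.

Theorem proposition3p1 (la : seq nat) (T : nat -> nat -> nat) :
  is_partition la ->
  weightZ la (toggle la T) =
  (\sum_(b <- boxes la) (T b.1 b.2 * hook la b.1 b.2)%N)%:Z.
Proof.
move=> la_part; rewrite /weightZ (inv_weight (toggle_invariant T la_part)).
by rewrite (big_morph Posz PoszD (erefl 0%:Z)).
Qed.
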